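(* Let $n\ge2$, let $a,b$ satisfy $0<a\le1$, $0<b\le\frac12$, $2a\ge1+b$, and let $0<c_0\le1$. If $F$ is an $(a,b)$-set of divergence, then $$\dim_H\big(F\cap[0,c_0]^n\big)\le \alpha:=\frac12+(n-1)a+b.$$
   Context: For $k\ge k_0$ let $R_k=2^k$, $D_k=R_k^{(n-(n-1)a+nb)/(n+1)}$, $Q_k=R_k^{\frac{n-1}{n+1}(2a-b-1)}$. A point $(p_1/q,\dots,p_n/q)$, $p_j,q\in\mathbb{Z}$, is an admissible fraction if $\gcd(p_1,q)=1$ and: $p_2,\dots,p_n$ arbitrary when $q$ is odd; all even when $q\equiv0\pmod4$; all odd when $q\equiv2\pmod4$. Fix $0<c\ll1$. Let $\mathcal{A}_k$ be the collection of axis-parallel boxes (''slabs'') of dimensions $cR_k^{-1/2}\times cR_k^{-1}\times\cdots\times cR_k^{-1}$ (long side in the $x_1$ direction) centered at $\big(2p_1R_k/(qD_k^2),p_2/(D_kq),\dots,p_n/(D_kq)\big)$ with $(p_1/q,\dots,p_n/q)$ admissible and $1\le q\le Q_k$; $F_k=\bigcup_{s\in\mathcal{A}_k}s$. The $(a,b)$-set of divergence is $F=\limsup_{k\to\infty}F_k=\bigcap_N\bigcup_{k\ge N}F_k$. $\dim_H$ denotes Hausdorff dimension. *)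

From HB Require Import structures.
From mathcomp Require Import all_boot all_order all_algebra.
From mathcomp Require Import all_classical all_reals all_analysis.
Import Order.TTheory GRing.Theory Num.Theory.
Local Open Scope classical_set_scope.
Local Open Scope ring_scope.

(* Points of R^n are functions 'I_n -> R; coordinate x_1 of the paper is index 0. *)

Definition edist (R : realType) (n : nat) (x y : 'I_n -> R) : R :=
  Num.sqrt (\sum_(i < n) (x i - y i) ^+ 2).

(* diameter (in \bar R; -oo for the empty set, +oo for unbounded sets) *)
Definition diam (R : realType) (n : nat) (A : set ('I_n -> R)) : \bar R :=
  ereal_sup [set (edist R n x y)%:E | x in A & y in A].

Definition hausdorff_pre (R : realType) (n : nat) (s delta : R)
  (E : set ('I_n -> R)) : \bar R :=
  ereal_inf [set (\sum_(0 <= k <oo) ((fine (diam R n (U k))) `^ s)%:E)%E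
            | U in [set U : nat -> set ('I_n -> R) |
                     E `<=` \bigcup_k U k /\ forall k, (diam R n (U k) <= delta%:E)%E]].

Definition hausdorff_measure (R : realType) (n : nat) (s : R)
  (E : set ('I_n -> R)) : \bar R :=
  ereal_sup [set hausdorff_pre R n s delta E | delta in [set d : R | 0 < d]].

Definition hausdorff_dim (R : realType) (n : nat) (E : set ('I_n -> R)) : \bar R :=
  ereal_inf [set s%:E | s in [set s : R | 0 <= s /\ hausdorff_measure R n s E = 0%E]].

Definition Rk (R : realType) (k : nat) : R := 2%:R ^+ k.
Definition Dk (R : realType) (n : nat) (a b : R) (k : nat) : R :=
  Rk R k `^ ((n%:R - (n%:R - 1) * a + n%:R * b) / (n%:R + 1)).
Definition Qk (R : realType) (n : nat) (a b : R) (k : nat) : R :=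
  Rk R k `^ ((n%:R - 1) / (n%:R + 1) * (2 * a - b - 1)).

(* (p_1/q, ..., p_n/q) is an admissible fraction; p_1 is p at index 0 *)
Definition admissible (n : nat) (p : 'I_n -> int) (q : int) : Prop :=
  (forall j : 'I_n, val j = 0%N -> coprimez (p j) q) /\
  (forall j : 'I_n, val j <> 0%N ->
     ((q %% 4)%Z = 0 -> (2 %| p j)%Z) /\
     ((q %% 4)%Z = 2 -> ~~ (2 %| p j)%Z)).

Definition slab (R : realType) (n : nat) (c : R) (k : nat) (ctr : 'I_n -> R)
  : set ('I_n -> R) :=
  [set x | forall j : 'I_n,
      `|x j - ctr j| <=
        (if val j == 0%N then c * (Rk R k `^ (- (1/2))) else c * (Rk R k)^-1) / 2].

Definition slab_center (R : realType) (n : nat) (a b : R) (k : nat)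
  (p : 'I_n -> int) (q : int) : 'I_n -> R :=
  fun j => if val j == 0%N
           then 2 * (p j)%:~R * Rk R k / (q%:~R * Dk R n a b k ^+ 2)
           else (p j)%:~R / (Dk R n a b k * q%:~R).

Definition Fk (R : realType) (n : nat) (a b c : R) (k : nat) : set ('I_n -> R) :=
  \bigcup_(pq in [set pq : ('I_n -> int) * int |
                   admissible n pq.1 pq.2 /\ 1 <= pq.2 /\ pq.2%:~R <= Qk R n a b k])
     slab R n c k (slab_center R n a b k pq.1 pq.2).

Definition div_set (R : realType) (n : nat) (a b c : R) (k0 : nat)
  : set ('I_n -> R) :=
  \bigcap_(N in [set: nat]) \bigcup_(k in [set k : nat | (N <= k)%N /\ (k0 <= k)%N])
     Fk R n a b c k.

Definition cube (R : realType) (n : nat) (c0 : R) : set ('I_n -> R) :=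
  [set x | forall j : 'I_n, 0 <= x j <= c0].

(* Fix k and write r = R_k. Inside the unit cube, F_k meets only slabs with
   q <= Q_k, |p_1| <= Q_k D_k^2 / r and |p_j| <= 2 Q_k D_k (j > 1), and each slab
   is cut along its long side into about r^{1/2} cubes of side 1/r. Since
   Q_k D_k^2 = r^{1+b} and (Q_k D_k)^{n+1} = r^{1+(n-1)a+b}, this covers F_k by
   O(r^alpha) sets of diameter O(1/r). A point of F lies in F_k for infinitely
   many k, so for s > alpha the s-dimensional Hausdorff premeasure of F is
   bounded by tails of the geometric series sum_k 2^{k(alpha - s)}; hence H^s(F) = 0. *)

From Pilot Require Import Defs.
From HB Require Import structures.
From mathcomp Require Import all_boot all_order all_algebra.
From mathcomp Require Import all_classical all_reals all_analysis.
From mathcomp Require Import ring lra zify.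
Import Order.TTheory GRing.Theory Num.Theory.
Local Open Scope classical_set_scope.
Local Open Scope ring_scope.

Lemma nneseries_geometric_le {R : realType} (a z : R) : 0 <= a -> 0 < z < 1 ->
  (\sum_(k <oo) (a * z ^+ k)%:E <= (a / (1 - z))%:E)%E.
Proof.
move=> a0 /andP[z0 z1]; apply: lime_le.
  apply: (@is_cvg_nneseries _ (fun k => (a * z ^+ k)%:E)) => k _ _.
  by rewrite lee_fin mulr_ge0 // exprn_ge0 // ltW.
apply: nearW => M; rewrite sumEFin lee_fin.
by apply: (geometric_le_lim M a0 z0); rewrite ger0_norm ?ltW.
Qed.

Lemma powRV {R : realType} (x s : R) : 0 < x -> x^-1 `^ s = (x `^ s)^-1.
Proof. by move=> x0; rewrite /powR invr_eq0 gt_eqF // lnV ?posrE // mulrN expRN. Qed.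

Lemma powR_exprn {R : realType} (x s : R) k : 0 <= x -> (x ^+ k) `^ s = (x `^ s) ^+ k.
Proof. by move=> x0; rewrite -powR_mulrn // powRAC powR_mulrn ?powR_ge0. Qed.

Lemma powR_ge1 {R : realType} (x s : R) : 1 <= x -> 0 <= s -> 1 <= x `^ s.
Proof. by move=> x1 s0; rewrite -[leLHS](powRr0 x) ler_powR. Qed.

Lemma absz_le_truncn {R : realType} (z : int) (X : R) :
  `|z%:~R : R| <= X -> (`|z| <= Num.truncn X)%N.
Proof.
by move=> zX; rewrite truncn_ge_nat ?(le_trans _ zX) // natr_absz intr_norm.
Qed.

Lemma exprn_powR {R : realType} (x s : R) j : 0 <= x -> (x `^ s) ^+ j = x `^ (s * j%:R).
Proof. by move=> x0; rewrite powRrM powR_mulrn ?powR_ge0. Qed.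

Lemma truncn_double_succ_le {R : realType} (x : R) : 0 <= x ->
  ((Num.truncn x).*2.+1)%:R <= 2 * x + 1.
Proof.
move=> x0; have := truncn_le x; rewrite x0 -addn1 -muln2 natrD natrM => tx.
by rewrite mulrC lerD2r ler_wpM2l.
Qed.

Section HausdorffBounds.
Variables (R : realType) (n : nat).
Implicit Types (A E : set ('I_n -> R)) (s d B : R).
Local Notation diam := (Defs.diam R n).

Lemma diam_set0 : diam set0 = -oo%E.
Proof.
rewrite /diam (_ : image2 _ _ _ = set0) ?ereal_sup0 //.
by apply/seteqP; split => z //= [x []].
Qed.

Lemma diam_le A B :
  (forall x y, A x -> A y -> Defs.edist R n x y <= B) -> (diam A <= B%:E)%E.
Proof.
by move=> AB; apply: ge_ereal_sup => _ [x Ax [y Ay <-]]; rewrite lee_fin AB.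
Qed.

Lemma diam_nth_le (L : seq (set ('I_n -> R))) B i :
  (forall A, A \in L -> (diam A <= B%:E)%E) -> (diam (nth set0 L i) <= B%:E)%E.
Proof.
move=> LB; have [iL|Li] := ltnP i (size L); first by rewrite LB ?mem_nth.
by rewrite nth_default // diam_set0 leNye.
Qed.

Lemma powR_diam_le A s B : 0 < s -> 0 <= B -> (diam A <= B%:E)%E ->
  fine (diam A) `^ s <= B `^ s.
Proof.
move=> s0 B0 AB; have [->|/set0P[x Ax]] := eqVneq A set0.
  by rewrite diam_set0 /= powR0 ?gt_eqF ?powR_ge0.
have : ((Defs.edist R n x x)%:E <= diam A)%E.
  by apply: ereal_sup_ubound; exists x => //; exists x.
rewrite /Defs.edist big1 ?sqrtr0 => [|i _]; last by rewrite subrr expr0n.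
move: AB; case: (diam A) => //= r; rewrite !lee_fin => rB r0.
by apply: ge0_ler_powR => //; rewrite ?nnegrE // ltW.
Qed.

Definition box (y : 'I_n -> R) (h : R) : set ('I_n -> R) :=
  [set x | forall j, y j <= x j <= y j + h].

Lemma diam_box y h : 0 <= h -> (diam (box y h) <= (n%:R * h)%:E)%E.
Proof.
move=> h0; apply: diam_le => x z xy zy; rewrite /Defs.edist.
have hs : \sum_(i < n) (x i - z i) ^+ 2 <= (n%:R * h) ^+ 2.
  apply: (@le_trans _ _ (\sum_(i < n) h ^+ 2)).
    apply: ler_sum => i _; have /andP[x1 x2] := xy i; have /andP[z1 z2] := zy i.
    rewrite -real_normK ?num_real // lerXn2r ?nnegrE ?normr_ge0 //.
    by rewrite ler_norml; apply/andP; split; lra.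
  rewrite sumr_const card_ord exprMn -[_ *+ n]mulr_natl ler_wpM2r ?exprn_ge0 //.
  by case: n {x z xy zy y} => [|m]; rewrite ?expr0n // expr2 ler_peMl // ?ler1n.
by rewrite -(ger0_norm (_ : 0 <= n%:R * h)) ?mulr_ge0 // -sqrtr_sqr ler_wsqrtr.
Qed.

Lemma hausdorff_pre_ge0 s d E : (0 <= hausdorff_pre R n s d E)%E.
Proof.
apply/ereal_infP => _ [U _ <-].
by apply: nneseries_ge0 => i _ _; rewrite lee_fin powR_ge0.
Qed.

Lemma hausdorff_pre_le_double_cover s d E (V : nat -> nat -> set ('I_n -> R)) :
  0 < s -> E `<=` \bigcup_k \bigcup_i V k i ->
  (forall k i, (diam (V k i) <= d%:E)%E) ->
  (hausdorff_pre R n s d E <=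
     \sum_(k <oo) \sum_(i <oo) ((fine (diam (V k i))) `^ s)%:E)%E.
Proof.
move=> s0 EV Vd.
pose g A := ((fine (diam A)) `^ s)%:E.
have g0 A : (0 <= g A)%E by rewrite lee_fin powR_ge0.
pose U m := if pickle_inv m is Some p then V p.1 p.2 else set0.
have <- : (\sum_(m <oo) g (U m) = \sum_(k <oo) \sum_(i <oo) g (V k i))%E.
  rewrite nneseries_esumT // (esumID (range (pickle : nat * nat -> nat))) //.
  rewrite [X in (_ + X)%E]esum1 ?adde0; last first.
    move=> m [_ /= mP]; rewrite /U.
    case e: (pickle_inv m) => [p|]; last by rewrite /g diam_set0 /= powR0 ?gt_eqF.
    by case: mP; exists p => //; have := @pickle_invK (nat * nat)%type m; rewrite e.
  have pickle_inj : set_inj [set: nat * nat] (pickle : nat * nat -> nat).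
    by move=> p q _ _; apply: (pcan_inj (@pickleK_inv (nat * nat)%type)).
  rewrite setTI (esum_image _ _ _ pickle_inj).
  rewrite nneseries_esumT => [|k]; last exact: nneseries_ge0.
  have -> : [set: nat * nat] = [set: nat] `*`` (fun=> [set: nat]) by apply/seteqP.
  rewrite (eq_esum (b := fun p : nat * nat => g (V p.1 p.2))); last first.
    by move=> p _; rewrite /U pickleK_inv.
  rewrite -(esum_esum (a := fun k i => g (V k i))) //.
  by apply: eq_esum => k _; rewrite nneseries_esumT.
apply: ereal_inf_lbound; exists U => //; split.
  move=> x /EV [k _ [i _ Vx]]; exists (pickle (k, i)) => //.
  by rewrite /U pickleK_inv.
by move=> m; rewrite /U; case: pickle_inv => [p|]; rewrite ?diam_set0 ?leNye.
Qed.

Lemma nneseries_powR_diam_le (L : seq (set ('I_n -> R))) s B : 0 < s -> 0 <= B ->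
  (forall A, A \in L -> (diam A <= B%:E)%E) ->
  (\sum_(i <oo) ((fine (diam (nth set0 L i))) `^ s)%:E <= ((size L)%:R * B `^ s)%:E)%E.
Proof.
move=> s0 B0 LB.
rewrite (nneseries_split 0 (size L)) => [|i _]; last by rewrite lee_fin powR_ge0.
rewrite eseries0 ?adde0 => [|i iL _]; last first.
  by rewrite nth_default // diam_set0 /= powR0 ?gt_eqF.
rewrite sumEFin lee_fin add0n mulr_natl -(subn0 (size L)) -sumr_const_nat subn0.
by apply: ler_sum_nat => i _; rewrite powR_diam_le // diam_nth_le.
Qed.

Lemma hausdorff_measure_eq0 s E :
  (forall d e, 0 < d -> 0 < e -> (hausdorff_pre R n s d E <= e%:E)%E) ->
  hausdorff_measure R n s E = 0%E.
Proof.
move=> pre_small; apply/eqP; rewrite eq_le; apply/andP; split.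
  apply: ge_ereal_sup => _ [d d0 <-]; apply/lee_addgt0Pr => e e0.
  by rewrite add0e pre_small.
apply: le_trans (hausdorff_pre_ge0 s 1 E) _.
by apply: ereal_sup_ubound; exists 1 => //=; rewrite ltr01.
Qed.

Lemma hausdorff_dim_le E al : 0 <= al ->
  (forall s, al < s -> hausdorff_measure R n s E = 0%E) ->
  (hausdorff_dim R n E <= al%:E)%E.
Proof.
move=> al0 null; apply/lee_addgt0Pr => e e0.
apply: ereal_inf_lbound; exists (al + e) => //.
by split; [rewrite addr_ge0 // ltW | rewrite null // ltrDl].
Qed.

Lemma hausdorff_dim_limsup_le E (L : nat -> seq (set ('I_n -> R))) (C K al : R) :
  0 <= al -> 0 <= C ->
  (forall k A, A \in L k -> (diam A <= (C / 2 ^+ k)%:E)%E) ->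
  (forall k, (size (L k))%:R <= K * (2 ^+ k) `^ al) ->
  (forall N, E `<=` \bigcup_(k in [set k | (N <= k)%N]) \bigcup_(A in [set` L k]) A) ->
  (hausdorff_dim R n E <= al%:E)%E.
Proof.
move=> al0 C0 LC LK EL; apply: hausdorff_dim_le => // s als.
have s0 : 0 < s by apply: le_lt_trans als.
have K0 : 0 <= K by have := LK 0%N; rewrite expr0 powR1 mulr1; exact/le_trans.
have two_pow_gt0 k : 0 < 2 ^+ k :> R by rewrite exprn_gt0.
pose rho := 2 `^ (al - s) : R.
have rho_itv : 0 < rho < 1.
  rewrite powR_gt0 //= /rho /powR pnatr_eq0 /= expR_lt1 pmulr_llt0 ?subr_lt0 //.
  by rewrite ln_gt0 // ltr1n.
have level k : (\sum_(i <oo) ((fine (diam (nth set0 (L k) i))) `^ s)%:E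
                 <= (K * C `^ s * rho ^+ k)%:E)%E.
  apply: le_trans (nneseries_powR_diam_le _ _ _ s0 _ (LC k)) _.
    by rewrite divr_ge0 // ltW.
  have scale : (2 ^+ k) `^ al * (C / 2 ^+ k) `^ s = C `^ s * rho ^+ k.
    rewrite powRM ?invr_ge0 ?(ltW (two_pow_gt0 k)) // powRV // /rho -powR_exprn //.
    rewrite powRB ?(gt_eqF (two_pow_gt0 k)) ?implybT //.
    by rewrite mulrCA.
  rewrite lee_fin; apply: le_trans (ler_wpM2r (powR_ge0 _ _) (LK k)) _.
  by rewrite -[leLHS]mulrA scale mulrA.
apply: hausdorff_measure_eq0 => d e d0 e0.
have [N [NC Nrho]] : exists N, C / 2 ^+ N <= d /\ K * C `^ s * rho ^+ N / (1 - rho) <= e.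
  have half_lt1 : `|2^-1 : R| < 1 by rewrite ger0_norm ?invf_lt1 // ltr1n.
  have rho_lt1 : `|rho| < 1 by case/andP: rho_itv => ? ?; rewrite ger0_norm // ltW.
  have [N _ hN] := filterI (cvgr0_norm_lt _ (cvg_geometric C half_lt1) _ d0)
    (cvgr0_norm_lt _ (cvg_geometric (K * C `^ s / (1 - rho)) rho_lt1) _ e0).
  exists N; have [/= /ltW hC /ltW hK] := hN N (leqnn N); split.
    by apply: le_trans hC; rewrite -exprVn ler_norm.
  by apply: le_trans hK; rewrite [leLHS]mulrAC ler_norm.
pose V k i := nth set0 (L (N + k)%N) i.
apply: le_trans (hausdorff_pre_le_double_cover _ _ _ V s0 _ _) _.
- move=> x /(EL N) [k /= Nk [A LA Ax]]; exists (k - N)%N => //.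
  by exists (index A (L k)) => //; rewrite /V subnKC // nth_index.
- move=> k i; apply: le_trans (diam_nth_le _ _ _ (LC _)) _; rewrite lee_fin.
  apply: le_trans NC; rewrite ler_wpM2l // lef_pV2 ?posrE //.
  by rewrite ler_weXn2l ?ler1n ?leq_addr.
apply: le_trans (lee_nneseries _ (fun k _ => level (N + k)%N)) _.
  by move=> k _ _; apply: nneseries_ge0 => i _ _; rewrite lee_fin powR_ge0.
under eq_eseriesr do rewrite exprD mulrA.
apply: le_trans (nneseries_geometric_le _ _ _ rho_itv) _.
  by rewrite !mulr_ge0 ?exprn_ge0 ?powR_ge0 // ltW //; case/andP: rho_itv.
by rewrite lee_fin.
Qed.

End HausdorffBounds.

Section DivergenceSetCover.
Variables (R : realType) (m : nat) (a b c : R).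
Local Notation n := m.+1.
Local Notation r k := (Rk R k).
Local Notation Q k := (Qk R n a b k).
Local Notation D k := (Dk R n a b k).

Lemma Rk_ge1 k : 1 <= r k.
Proof. by rewrite /Rk exprn_ege1 // ler1n. Qed.

Lemma Rk_gt0 k : 0 < r k.
Proof. exact: lt_le_trans (Rk_ge1 k). Qed.

Lemma Dk_gt0 k : 0 < D k.
Proof. by rewrite powR_gt0 // Rk_gt0. Qed.

Lemma Rk_sqrt k : r k `^ (1/2) * r k `^ (1/2) = r k.
Proof.
rewrite -powRD; last by rewrite (gt_eqF (Rk_gt0 k)) implybT.
have -> : 1/2 + 1/2 = 1 :> R by lra.
by rewrite powRr1 // ltW // Rk_gt0.
Qed.

Lemma Rk_sqrt_ge1 k : 1 <= r k `^ (1/2).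
Proof. by rewrite powR_ge1 ?Rk_ge1. Qed.

Lemma slab_halfwidth {k ctr x} : c <= 1 -> slab R n c k ctr x -> forall j,
  `|x j - ctr j| <= (if val j == 0%N then (r k `^ (1/2))^-1 else (r k)^-1) / 2.
Proof.
move=> c1 xS j; move: (xS j) => /le_trans; apply; rewrite -powRN ler_pM2r //.
by case: ifP => _; rewrite ler_piMl ?powR_ge0 // invr_ge0 ltW // Rk_gt0.
Qed.

Definition slab_cell k (ctr : 'I_n -> R) (t : nat) : set ('I_n -> R) :=
  box R n (fun j => if val j == 0%N
                    then ctr j - (r k `^ (1/2))^-1 / 2 + t%:R / r k
                    else ctr j - (r k)^-1 / 2) (r k)^-1.

Definition cells_per_slab k := (Num.truncn (r k `^ (1/2))).+1.

Lemma slab_sub_cells {k ctr x} : c <= 1 -> slab R n c k ctr x ->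
  exists2 t, (t < cells_per_slab k)%N & slab_cell k ctr t x.
Proof.
move=> c1 xS; have r0 := Rk_gt0 k; have sq0 := lt_le_trans ltr01 (Rk_sqrt_ge1 k).
pose w := x ord0 - ctr ord0 + (r k `^ (1/2))^-1 / 2.
have /andP[w0 wsq] : 0 <= w <= (r k `^ (1/2))^-1.
  by have := slab_halfwidth c1 xS ord0; rewrite /= ler_norml /w => /andP[]; lra.
have wr0 : 0 <= w * r k by rewrite mulr_ge0 // ltW.
exists (Num.truncn (w * r k)).
  have sq_r : r k / r k `^ (1/2) = r k `^ (1/2).
    by rewrite -{1}Rk_sqrt mulfK ?gt_eqF.
  by rewrite ltnS le_truncn // -sq_r [leLHS]mulrC ler_wpM2l // ltW.
move=> j; case: ifP => [/eqP j0 | jS].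
  have -> : j = ord0 by apply: val_inj.
  have /andP[t_le t_gt] := truncn_itv wr0.
  rewrite -ler_pdivrMr // in t_le; rewrite -ltr_pdivlMr // -natr1 mulrDl mul1r in t_gt.
  by rewrite /w in t_le t_gt *; apply/andP; split; lra.
by have := slab_halfwidth c1 xS j; rewrite jS ler_norml => /andP[]; lra.
Qed.

Lemma slab_center_bounded {k ctr x} : c <= 1 -> slab R n c k ctr x ->
  (forall j, 0 <= x j <= 1) -> forall j, `|ctr j| <= 2.
Proof.
move=> c1 xS x01 j; have := slab_halfwidth c1 xS j; have /andP[x0 x1] := x01 j.
have : (if val j == 0%N then (r k `^ (1/2))^-1 else (r k)^-1) <= 1.
  by case: ifP => _; rewrite invf_le1 ?Rk_ge1 ?Rk_sqrt_ge1 // (lt_le_trans ltr01)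
    ?Rk_ge1 ?Rk_sqrt_ge1.
move: (if _ then _ else _) => w w1; rewrite !ler_norml => /andP[]; lra.
Qed.

Definition q_bound k := Num.truncn (Q k).
Definition p0_bound k := Num.truncn (Q k * D k ^+ 2 / r k).
Definition p1_bound k := Num.truncn (2 * (Q k * D k)).

Lemma numerator0_le {k p q} : 1 <= q -> q%:~R <= Q k ->
  `|slab_center R n a b k p q ord0| <= 2 -> (`|p ord0| <= p0_bound k)%N.
Proof.
move=> q1 qQ ctr2; apply: absz_le_truncn.
have r0 := Rk_gt0 k; have D0 := Dk_gt0 k; have q0 : 0 < q%:~R :> R by rewrite ltr0z.
have w0 : 0 <= D k ^+ 2 / r k by rewrite divr_ge0 ?exprn_ge0 // ltW.
have y0 : 0 <= q%:~R * (D k ^+ 2 / r k) / 2 by rewrite divr_ge0 // mulr_ge0 // ltW.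
have -> : (p ord0)%:~R = slab_center R n a b k p q ord0 * (q%:~R * (D k ^+ 2 / r k) / 2).
  by rewrite /slab_center /=; field; rewrite !gt_eqF ?exprn_gt0.
rewrite normrM (ger0_norm y0); apply: le_trans (ler_wpM2r y0 ctr2) _.
by rewrite mulrC divfK // -mulrA ler_wpM2r.
Qed.

Lemma numeratorS_le {k p q} j : j != ord0 -> 1 <= q -> q%:~R <= Q k ->
  `|slab_center R n a b k p q j| <= 2 -> (`|p j| <= p1_bound k)%N.
Proof.
move=> j0 q1 qQ ctr2; apply: absz_le_truncn.
have D0 := Dk_gt0 k; have q0 : 0 < q%:~R :> R by rewrite ltr0z.
have -> : (p j)%:~R = slab_center R n a b k p q j * (q%:~R * D k).
  by rewrite /slab_center ifN //; field; rewrite !gt_eqF.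
have y0 : 0 <= q%:~R * D k by rewrite mulr_ge0 // ltW.
rewrite normrM (ger0_norm y0); apply: le_trans (ler_wpM2r y0 ctr2) _.
by rewrite ler_wpM2l // ler_wpM2r // ltW.
Qed.

Definition piece_index k := ('I_(q_bound k) * 'I_((p0_bound k).*2.+1) *
  {ffun 'I_m -> 'I_((p1_bound k).*2.+1)} * 'I_(cells_per_slab k))%type.

(* numerators are stored shifted by the bound, so that they become natural numbers *)
Definition index_numerators k (i0 : nat) (ip : 'I_m -> nat) : 'I_n -> int :=
  fun j => if unlift ord0 j is Some i then (ip i)%:Z - (p1_bound k)%:Z
           else i0%:Z - (p0_bound k)%:Z.

Definition piece k (i : piece_index k) : set ('I_n -> R) :=
  let: (iq, i0, ip, t) := i in
  slab_cell k (slab_center R n a b k (index_numerators k i0 (fun l => ip l)) iq.+1%:Z) t.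

Lemma Fk_sub_pieces k x : c <= 1 -> (forall j, 0 <= x j <= 1) ->
  Fk R n a b c k x -> exists i : piece_index k, piece k i x.
Proof.
move=> c1 x01 [[p q] /= [_ [q1 qQ]] xS].
have ctr2 := slab_center_bounded c1 xS x01.
have [t t_lt xt] := slab_sub_cells c1 xS.
have q_lt : (`|q|.-1 < q_bound k)%N.
  have : (`|q| <= q_bound k)%N.
    by rewrite absz_le_truncn // ger0_norm // (le_trans ler01) // ler1z.
  lia.
have p0_le := numerator0_le q1 qQ (ctr2 ord0).
have pS_le i : (`|p (lift ord0 i)| <= p1_bound k)%N.
  by apply: (numeratorS_le _ _ q1 qQ (ctr2 _)); rewrite eq_sym neq_lift.
have p0_lt : (`|(p ord0 + (p0_bound k)%:Z)%R| < (p0_bound k).*2.+1)%N by lia.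
have pS_lt i : (`|(p (lift ord0 i) + (p1_bound k)%:Z)%R| < (p1_bound k).*2.+1)%N.
  by have := pS_le i; lia.
exists (Ordinal q_lt, Ordinal p0_lt, [ffun i => Ordinal (pS_lt i)], Ordinal t_lt).
rewrite /piece /= [index_numerators _ _ _](_ : _ = p); last first.
  apply/funext => j; rewrite /index_numerators.
  by case: unliftP => [i ->|->]; rewrite ?ffunE /=; [have := pS_le i |]; lia.
by have -> : (`|q|.-1).+1%:Z = q by lia.
Qed.

Lemma card_piece_index k : #|{: piece_index k}| =
  (q_bound k * (p0_bound k).*2.+1 * (p1_bound k).*2.+1 ^ m * cells_per_slab k)%N.
Proof. by rewrite !card_prod card_ffun !card_ord. Qed.

Lemma Qk_Dk k : Q k * D k = r k `^ (((n%:R - 1) * a + b + 1) / (n%:R + 1)).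
Proof.
have r0 := Rk_gt0 k; rewrite -powRD ?(gt_eqF r0) ?implybT //.
by congr (_ `^ _); field; rewrite gt_eqF // ltr_wpDl ?ler0n // ltr_pwDl.
Qed.

Lemma Qk_Dk2_div k : Q k * D k ^+ 2 / r k = r k `^ b.
Proof.
have r0 := Rk_gt0 k.
rewrite exprn_powR ?ltW // -powRD ?(gt_eqF r0) ?implybT //.
rewrite -[X in _ / X](powRr1 (ltW r0)) -powRB ?(gt_eqF r0) ?implybT //.
by congr (_ `^ _); field; rewrite gt_eqF // ltr_wpDl ?ler0n // ltr_pwDl.
Qed.

Lemma card_piece_index_le k : 0 <= a -> 0 <= b ->
  (#|{: piece_index k}|%:R : R) <= 6 * 5 ^+ m * r k `^ (1/2 + (n%:R - 1) * a + b).
Proof.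
move=> a0 b0; have r0 := Rk_gt0 k; have sq1 := Rk_sqrt_ge1 k.
have QD1 : 1 <= Q k * D k.
  rewrite Qk_Dk powR_ge1 ?Rk_ge1 // divr_ge0 // -natr1 ?addrK ?addr_ge0 ?mulr_ge0 //.
have QD2 : 1 <= Q k * D k ^+ 2 / r k by rewrite Qk_Dk2_div powR_ge1 ?Rk_ge1.
have hq : (q_bound k)%:R <= Q k by rewrite truncn_le powR_ge0.
have hp0 : ((p0_bound k).*2.+1)%:R <= 3 * (Q k * D k ^+ 2 / r k).
  by apply: le_trans (truncn_double_succ_le _ _) _; lra.
have hp1 : ((p1_bound k).*2.+1)%:R <= 5 * (Q k * D k).
  by apply: le_trans (truncn_double_succ_le _ _) _; lra.
have ht : (cells_per_slab k)%:R <= 2 * r k `^ (1/2).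
  have : (Num.truncn (r k `^ (1/2)))%:R <= r k `^ (1/2) by rewrite truncn_le powR_ge0.
  by rewrite /cells_per_slab -[_.+1%:R]natr1; lra.
rewrite card_piece_index !natrM natrX.
apply: le_trans (ler_pM _ _ (ler_pM _ _ (ler_pM _ _ hq hp0) (lerXn2r _ _ _ hp1)) ht) _;
  rewrite ?nnegrE ?mulr_ge0 ?exprn_ge0 ?powR_ge0 //.
have -> : Q k * (3 * (Q k * D k ^+ 2 / r k)) * (5 * (Q k * D k)) ^+ m *
    (2 * r k `^ (1/2)) = 6 * 5 ^+ m * ((Q k * D k) ^+ n.+1 / r k `^ 1 * r k `^ (1/2)).
  by rewrite powRr1 ?ltW // !exprMn !exprS; field; rewrite gt_eqF.
rewrite Qk_Dk exprn_powR ?(ltW r0) // -powRB ?(gt_eqF r0) ?implybT //.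
rewrite -powRD ?(gt_eqF r0) ?implybT //.
rewrite [X in _ * _ `^ X <= _](_ : _ = 1/2 + (n%:R - 1) * a + b) //.
by field; rewrite gt_eqF // ltr_wpDl ?ler0n // ltr_pwDl.
Qed.

End DivergenceSetCover.

Theorem theorem5p1 (R : realType) (n : nat) (a b c c0 : R) (k0 : nat)
  (F : set ('I_n -> R)) :
  (2 <= n)%N ->
  0 < a -> a <= 1 -> 0 < b -> b <= 1/2 -> 1 + b <= 2 * a ->
  0 < c -> c <= 1 ->
  0 < c0 -> c0 <= 1 ->
  F = div_set R n a b c k0 ->
  (hausdorff_dim R n (F `&` cube R n c0) <= (1/2 + (n%:R - 1) * a + b)%:E)%E.
Proof.
(* the upper bound only uses 0 < a, 0 < b, c <= 1 and c0 <= 1 *)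
case: n F => [|[|m]] F // _ a0 _ b0 _ _ _ c1 _ c01 ->.
pose L k := [seq piece R m.+1 a b k i | i <- enum {: piece_index R m.+1 a b k}].
apply: (@hausdorff_dim_limsup_le R m.+2 _ L m.+2%:R (6 * 5 ^+ m.+1)) => //.
- by rewrite !addr_ge0 ?mulr_ge0 ?subr_ge0 ?ler1n // ltW.
- move=> k _ /mapP[[[[iq i0] ip] t] _ ->].
  by apply: diam_box; rewrite invr_ge0 ltW // Rk_gt0.
- by move=> k; rewrite size_map -cardE card_piece_index_le // ltW.
move=> N x [/(_ N I) [k [Nk _] Fx] x_cube].
have x01 j : 0 <= x j <= 1 by have /andP[-> /le_trans->] := x_cube j.
have [i xi] := @Fk_sub_pieces R m.+1 a b c k x c1 x01 Fx.
exists k => //; exists (piece R m.+1 a b k i) => //.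
by apply/mapP; exists i; rewrite ?mem_enum.
Qed.
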